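(* Let $C$ be a monotone normalized cost function and let $H:2^{M_1}\times\cdots\times2^{M_n}\to\mathbb{R}_{\ge0}\cup\{\infty\}$ be normalized ($H(\vec\emptyset)=0$) and monotone. Let $\mathcal A$ be the VCG-based mechanism with function $H$, defined on a valuation domain that contains all additive valuations, and suppose that $\mathcal A$ always covers the cost on this domain. Then $H(\vec S)\ge P_C(\vec S)$ for every allocation $\vec S$.
   Context: Setting. $N=\{1,\dots,n\}$ is a set of players and $M_1,\dots,M_n$ are pairwise disjoint finite sets; $M=\bigcup_i M_i$. An allocation is a vector $\vec S=(S_1,\dots,S_n)$ with $S_i\subseteq M_i$, identified with $\bigcup_iS_i\subseteq M$; $\vec\emptyset=(\emptyset,\dots,\emptyset)$. A cost function is a monotone $C:2^M\to\mathbb{R}_{\ge0}$ with $C(\emptyset)=0$; valuations $v_i:2^{M_i}\to\mathbb R_{\ge0}$ are monotone with $v_i(\emptyset)=0$; $v_i$ is additive if $v_i(S)=\sum_{j\in S}v_i(\{j\})$. The potential function is $P_C(\vec S)=\sum_{\emptyset\neq I\subseteq N}\frac{C(\bigcup_{i\in I}S_i)}{|I|\binom{n}{|I|}}$. The VCG-based mechanism with $H$ outputs $\overrightarrow{ALG}\in\arg\max_{\vec S}\sum_iv_i(S_i)-H(\vec S)$ (some tie-breaking), for each $i$ computes $\overrightarrow{ALG^{-i}}$ maximizing the same objective over allocations with $i$-th component $\emptyset$, and charges $p_i=\left[\sum_jv_j(ALG^{-i}_j)-H(\overrightarrow{ALG^{-i}})\right]-\left[\sum_{j\ne i}v_j(ALG_j)-H(\overrightarrow{ALG})\right]$.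 It always covers the cost if $\sum_ip_i\ge C(\overrightarrow{ALG})$ for every profile in the domain. *)

From HB Require Import structures.
From mathcomp Require Import all_boot all_order all_algebra.
Set Implicit Arguments. Unset Strict Implicit. Unset Printing Implicit Defensive.
Import Order.TTheory GRing.Theory Num.Theory.
Local Open Scope ring_scope.

(* Items M form a finite type; [own x] is the player owning item x, so
   M_i = part own i, and the M_i are pairwise disjoint with union M.
   An allocation (S_1,...,S_n) is identified with S = \bigcup_i S_i : {set M},
   S_i = S :&: part own i. *)
Definition part (n : nat) (M : finType) (own : M -> 'I_n) (i : 'I_n) : {set M} :=
  [set x | own x == i].

(* Extended nonnegative reals R_{>=0} \cup {oo}: None stands for oo. *)
Definition ext_le (R : realFieldType) (a b : option R) : Prop :=
  match a, b with
  | _, None => True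
  | None, Some _ => False
  | Some x, Some y => x <= y
  end.

(* A valuation profile: v i is player i's valuation; only its values on
   subsets of M_i are ever used. *)
Definition profile (R : realFieldType) (n : nat) (M : finType) :=
  'I_n -> {set M} -> R.

Definition valid_profile (R : realFieldType) n (M : finType) (own : M -> 'I_n)
  (v : profile R n M) : Prop :=
  forall i, v i set0 = 0 /\
    (forall S T : {set M}, S \subset T -> T \subset part own i -> v i S <= v i T) /\
    (forall S : {set M}, S \subset part own i -> 0 <= v i S).

Definition additive_profile (R : realFieldType) n (M : finType) (own : M -> 'I_n)
  (v : profile R n M) : Prop :=
  forall i (S : {set M}), S \subset part own i -> v i S = \sum_(j in S) v i [set j].

Definition welfare (R : realFieldType) n (M : finType) (own : M -> 'I_n)
  (v : profile R n M) (S : {set M}) : R :=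
  \sum_(i < n) v i (S :&: part own i).

Definition welfare_but (R : realFieldType) n (M : finType) (own : M -> 'I_n)
  (v : profile R n M) (i : 'I_n) (S : {set M}) : R :=
  \sum_(j < n | j != i) v j (S :&: part own j).

(* S maximizes sum_i v_i(S_i) - H(S) among allocations satisfying F
   (with H(S) finite, as the value -oo is never maximal since H(empty)=0). *)
Definition is_opt (R : realFieldType) n (M : finType) (own : M -> 'I_n)
  (H : {set M} -> option R) (v : profile R n M) (F : {set M} -> Prop)
  (S : {set M}) : Prop :=
  F S /\ exists h, H S = Some h /\
    forall T h', F T -> H T = Some h' ->
      welfare own v T - h' <= welfare own v S - h.

Definition Hval (R : realFieldType) (M : finType) (H : {set M} -> option R)
  (S : {set M}) : R := odflt 0 (H S).

(* VCG payment of player i, given ALG = A and ALG^{-i} = Ai. *)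
Definition vcg_payment (R : realFieldType) n (M : finType) (own : M -> 'I_n)
  (H : {set M} -> option R) (v : profile R n M) (i : 'I_n) (A Ai : {set M}) : R :=
  (welfare own v Ai - Hval H Ai) - (welfare_but own v i A - Hval H A).

Definition potential (R : realFieldType) n (M : finType) (own : M -> 'I_n)
  (C : {set M} -> R) (S : {set M}) : R :=
  \sum_(I : {set 'I_n} | I != set0)
     C (\bigcup_(i in I) (S :&: part own i)) / (#|I|%:R * ('C(n, #|I|))%:R).

From HB Require Import structures.
From mathcomp Require Import all_boot all_order all_algebra.
From mathcomp Require Import ring lra.
Set Implicit Arguments. Unset Strict Implicit. Unset Printing Implicit Defensive.
Import Order.TTheory GRing.Theory Num.Theory.
Local Open Scope ring_scope.

(* Write S_{-i} for S minus the items of player i. The weights of the potential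
   satisfy n P_C(S) = C(S) + sum_i P_C(S_{-i}). On the other hand, feeding the
   mechanism the additive valuation that gives every item of S the value H(S) + 1
   forces ALG to contain S and ALG^{-i} to meet S in exactly S_{-i}, so player i pays
   H(S) - H(S_{-i}) and cost recovery gives C(S) <= sum_i (H(S) - H(S_{-i})).
   Hence d = P_C - H satisfies n d(S) <= sum_i d(S_{-i}); as S_{-i} is a proper
   subset of S for at least one i, induction on |S| yields d <= 0. *)

Section SubsetSums.
Variables (V : nmodType) (T : finType).

Lemma sum_setD1 (i : T) (F : {set T} -> nat -> V) :
  \sum_(I : {set T}) F (I :\ i) #|I| =
  \sum_(I : {set T} | i \notin I) (F I #|I| + F I #|I|.+1).
Proof.
rewrite (bigID (fun I : {set T} => i \in I)) /= addrC big_split /=; congr (_ + _).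
  apply: eq_bigr => I iI.
  by have /setDidPl -> : [disjoint I & [set i]] by rewrite disjoint_sym disjoints1.
rewrite (reindex_onto (fun J => i |: J) (fun I => I :\ i)) /=; last first.
  by move=> I iI; rewrite setD1K.
apply: eq_big => [J | J /andP[_ /eqP DJ]].
  rewrite setU11 /=; have [iJ | iJ] := boolP (i \in J); last by rewrite setU1K ?eqxx.
  by apply/negbTE/eqP => /setP/(_ i); rewrite !inE eqxx iJ.
have iJ : i \notin J by rewrite -DJ !inE eqxx.
by rewrite DJ cardsU1 iJ.
Qed.

Lemma sum_exchange_notin (G : {set T} -> V) :
  \sum_(i : T) \sum_(I : {set T} | i \notin I) G I =
  \sum_(I : {set T}) G I *+ (#|T| - #|I|).
Proof.
rewrite (exchange_big_dep predT) //=; apply: eq_bigr => I _.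
rewrite (eq_bigl (mem (~: I))) => [|i]; last by rewrite !inE.
by rewrite sumr_const -(cardsC I) addKn.
Qed.

End SubsetSums.

(* [potential_weight n 0] is [0^-1 = 0], so the empty coalition never contributes. *)
Definition potential_weight (R : fieldType) (n m : nat) : R := (m%:R * 'C(n, m)%:R)^-1.

Lemma potential_weightS (R : numFieldType) (n m : nat) : (0 < m < n)%N ->
  n%:R * potential_weight R n m =
  (n - m)%:R * (potential_weight R n m + potential_weight R n m.+1).
Proof.
case/andP=> m_gt0 lt_mn.
have binS : 'C(n, m.+1)%:R = (n - m)%:R * 'C(n, m)%:R / m.+1%:R :> R.
  by rewrite -natrM -mul_bin_left natrM mulrAC divff ?mul1r // pnatr_eq0.
have m_neq0 : m%:R != 0 :> R by rewrite pnatr_eq0 -lt0n.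
have bin_neq0 : 'C(n, m)%:R != 0 :> R by rewrite pnatr_eq0 -lt0n bin_gt0 ltnW.
have nm_neq0 : n%:R - m%:R != 0 :> R by rewrite subr_eq0 eqr_nat gtn_eqF.
rewrite /potential_weight binS natrB ?(ltnW lt_mn) //.
by field; rewrite bin_neq0 nm_neq0 m_neq0 andbT addrC natr1 pnatr_eq0.
Qed.

Section Potential.
Variables (R : realFieldType) (n : nat) (M : finType) (own : M -> 'I_n).
Variable C : {set M} -> R.

Lemma bigcup_setI_part (S : {set M}) (I : {set 'I_n}) :
  \bigcup_(i in I) (S :&: part own i) = S :&: own @^-1: I.
Proof.
apply/setP=> x; rewrite !inE; apply/bigcupP/andP => [[i iI]|[xS xI]].
  by rewrite !inE => /andP[-> /eqP ->].
by exists (own x); rewrite // !inE xS eqxx.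
Qed.

Lemma potentialE (S : {set M}) :
  potential own C S =
  \sum_(I : {set 'I_n}) C (S :&: own @^-1: I) * potential_weight R n #|I|.
Proof.
rewrite /potential [RHS](bigD1 set0) //= cards0 /potential_weight.
rewrite mul0r invr0 mulr0 add0r; apply: eq_bigr => I _.
by rewrite bigcup_setI_part.
Qed.

Lemma potential0 : C set0 = 0 -> potential own C set0 = 0.
Proof. by move=> C0; rewrite potentialE; apply: big1 => I _; rewrite set0I C0 mul0r. Qed.

Lemma setD_part_preimset (S : {set M}) (i : 'I_n) (I : {set 'I_n}) :
  (S :\: part own i) :&: own @^-1: I = S :&: own @^-1: (I :\ i).
Proof. by apply/setP=> x; rewrite !inE andbCA andbA. Qed.

Lemma potential_rec (S : {set M}) : C set0 = 0 -> (0 < n)%N ->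
  potential own C S *+ n = C S + \sum_(i < n) potential own C (S :\: part own i).
Proof.
move=> C0 n_gt0; pose g (I : {set 'I_n}) := C (S :&: own @^-1: I).
pose w m := potential_weight R n m.
have peel i : potential own C (S :\: part own i) =
    \sum_(I : {set 'I_n} | i \notin I) g I * (w #|I| + w #|I|.+1).
  rewrite potentialE; under eq_bigr do rewrite setD_part_preimset.
  by rewrite (sum_setD1 i (fun J m => g J * w m)); under eq_bigr do rewrite -mulrDr.
rewrite (eq_bigr _ (fun i _ => peel i)) sum_exchange_notin card_ord.
have wn : potential_weight R n n *+ n = 1.
  rewrite /potential_weight binn mulr1n mulr1 -[_ *+ n]mulr_natr mulVf //.
  by rewrite pnatr_eq0 -lt0n.
rewrite potentialE -sumrMnl (bigD1 setT) // [in RHS](bigD1 setT) //=.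
rewrite !cardsT card_ord subnn mulr0n add0r -mulrnAr wn mulr1 preimsetT setIT.
congr (_ + _); apply: eq_bigr => I I_neqT.
have [-> | I_neq0] := eqVneq I set0.
  by rewrite /g preimset0 setI0 C0 !mul0r !mul0rn.
have lt_In : (0 < #|I| < n)%N.
  rewrite card_gt0 I_neq0 /= -[n in (_ < n)%N]card_ord -cardsT.
  by rewrite proper_card // properT.
rewrite -mulrnAr -[RHS]mulrnAr -[_ *+ n]mulr_natl -[_ *+ (n - _)]mulr_natl.
by rewrite potential_weightS.
Qed.

End Potential.

Section IndicatorProfile.
Variables (R : realFieldType) (n : nat) (M : finType) (own : M -> 'I_n).

Definition indicator_profile (L : R) (S : {set M}) : profile R n M :=
  fun _ T => \sum_(x in T) L * (x \in S)%:R.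

Lemma sum_indicator (L : R) (S T : {set M}) :
  \sum_(x in T) L * (x \in S)%:R = L * #|T :&: S|%:R.
Proof.
rewrite -mulr_sumr; congr (_ * _).
rewrite -sum1_card natr_sum big_mkcond [RHS]big_mkcond /=.
by apply: eq_bigr => x _; rewrite !inE; case: (x \in T); case: (x \in S).
Qed.

Lemma indicator_profileE L S i T : indicator_profile L S i T = L * #|T :&: S|%:R.
Proof. exact: sum_indicator. Qed.

Lemma indicator_profile_valid L S : 0 <= L -> valid_profile own (indicator_profile L S).
Proof.
move=> L_ge0 i; rewrite indicator_profileE set0I cards0 mulr0; split=> //.
split=> [T1 T2 sub12 _ | T _].
  rewrite !indicator_profileE ler_wpM2l // ler_nat.
  by rewrite subset_leq_card // setSI.
by rewrite indicator_profileE mulr_ge0.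
Qed.

Lemma indicator_profile_additive L S : additive_profile own (indicator_profile L S).
Proof. by move=> i T _; apply: eq_bigr => x _; rewrite /indicator_profile big_set1. Qed.

Lemma welfare_indicator_profile L S T :
  welfare own (indicator_profile L S) T = L * #|T :&: S|%:R.
Proof.
rewrite -sum_indicator (partition_big own predT) //=.
by apply: eq_bigr => i _; apply: eq_bigl => x; rewrite !inE.
Qed.

Lemma setD_partI (S : {set M}) i : (S :\: part own i) :&: part own i = set0.
Proof. by rewrite setDE -setIA (setIC (~: _)) setICr setI0. Qed.

Lemma welfare_but_setD (v : profile R n M) i A :
  v i set0 = 0 -> welfare_but own v i A = welfare own v (A :\: part own i).
Proof.
move=> vi0; rewrite /welfare_but /welfare [RHS](bigD1 i) //=.
rewrite setD_partI vi0 add0r; apply: eq_bigr => j ji; congr (v j _).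
apply/setP => x; rewrite !inE; case: (own x =P j) => [->|]; last by rewrite !andbF.
by rewrite ji.
Qed.

End IndicatorProfile.

Section Mechanism.
Variables (R : realFieldType) (n : nat) (M : finType) (own : M -> 'I_n).
Variable H : {set M} -> option R.
Hypothesis H_ge0 : forall (S : {set M}) h, H S = Some h -> 0 <= h.
Hypothesis H_mono : forall S T : {set M}, S \subset T -> ext_le (H S) (H T).

Lemma Hval_subset (U S : {set M}) h :
  U \subset S -> H S = Some h -> H U = Some (Hval H U) /\ Hval H U <= h.
Proof. by move=> /H_mono; rewrite /Hval => + HS; rewrite HS; case: (H U). Qed.

(* Each item of [S] is worth more than any saving in [H], so an optimum for
   [indicator_profile (h + 1) S] takes every item of [S] it may take. *)
Lemma is_opt_indicator_profile (F : {set M} -> Prop) (S U A : {set M}) (h u : R) :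
  U \subset S -> F U -> H U = Some u -> u <= h ->
  (forall T, F T -> T :&: S \subset U) ->
  is_opt own H (indicator_profile (h + 1) S) F A -> A :&: S = U /\ H A = Some u.
Proof.
move=> US FU HU le_uh trace_sub [FA [a [HA optA]]].
have := optA U u FU HU; rewrite !welfare_indicator_profile (setIidPl US) => opt.
have u_ge0 := H_ge0 HU; have a_ge0 := H_ge0 HA.
have UA : U \subset A.
  apply/contraT => not_UA.
  have : A :&: S \proper U.
    rewrite properEneq trace_sub // andbT.
    by apply: contraNneq not_UA => <-; exact: subsetIl.
  move/proper_card; rewrite -(ler_nat R) -natr1.
  set x := #|A :&: S|%:R in opt *; set y := #|U|%:R in opt * => lt_xy.
  have : (h + 1) * 1 <= (h + 1) * (y - x) by apply: ler_wpM2l; lra.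
  lra.
have AS : A :&: S = U by apply/eqP; rewrite eqEsubset trace_sub //= subsetI UA US.
have := H_mono UA; rewrite HU HA /= => le_ua.
by split=> //; congr Some; rewrite AS in opt; lra.
Qed.

Variable C : {set M} -> R.
Hypothesis C_mono : forall S T : {set M}, S \subset T -> C S <= C T.
Variable D : profile R n M -> Prop.
Hypothesis D_additive : forall v, valid_profile own v -> additive_profile own v -> D v.
Variables (alg : profile R n M -> {set M}) (alg_minus : profile R n M -> 'I_n -> {set M}).
Hypothesis alg_opt : forall v, D v -> is_opt own H v (fun _ => True) (alg v).
Hypothesis alg_minus_opt : forall v i, D v ->
  is_opt own H v (fun T => T :&: part own i = set0) (alg_minus v i).
Hypothesis covers_cost : forall v, D v ->
  C (alg v) <= \sum_(i < n) vcg_payment own H v i (alg v) (alg_minus v i).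

Lemma cost_le_sum_Hval_setD (S : {set M}) h :
  H S = Some h -> C S <= \sum_(i < n) (h - Hval H (S :\: part own i)).
Proof.
move=> HS; have h_ge0 := H_ge0 HS.
pose v : profile R n M := indicator_profile (h + 1) S.
have Dv : D v.
  apply: D_additive; last exact: indicator_profile_additive.
  by apply: indicator_profile_valid; lra.
have [AS HA] : alg v :&: S = S /\ H (alg v) = Some h.
  by apply: is_opt_indicator_profile (alg_opt Dv) => // T _; exact: subsetIr.
have payment i :
    vcg_payment own H v i (alg v) (alg_minus v i) = h - Hval H (S :\: part own i).
  set U := S :\: part own i.
  have [HU le_uh] := Hval_subset (subsetDl S (part own i)) HS.
  have [AiS HAi] : alg_minus v i :&: S = U /\ H (alg_minus v i) = Some (Hval H U).
    apply: is_opt_indicator_profile (alg_minus_opt i Dv) => //.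
    - exact: subsetDl.
    - exact: setD_partI.
    - move=> T TMi0; apply/subsetP => x; rewrite !inE => /andP[xT ->]; rewrite andbT.
      by apply/eqP => xi; move/setP: TMi0 => /(_ x); rewrite !inE xT xi eqxx.
  have AU : (alg v :\: part own i) :&: S = U by rewrite setIDAC AS.
  rewrite /vcg_payment welfare_but_setD; last first.
    by rewrite /v indicator_profileE set0I cards0 mulr0.
  rewrite !welfare_indicator_profile AiS AU.
  by rewrite [Hval H (alg v)]/Hval [Hval H (alg_minus v i)]/Hval HA HAi /=; lra.
rewrite -(eq_bigr _ (fun i _ => payment i)).
by apply: le_trans (covers_cost Dv); apply: C_mono; rewrite -AS subsetIl.
Qed.

Hypothesis C0 : C set0 = 0.

Lemma potential_gap_le_peeled (S : {set M}) h : H S = Some h -> S != set0 ->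
  (potential own C S - h) *+ n <=
  \sum_(i < n) (potential own C (S :\: part own i) - Hval H (S :\: part own i)).
Proof.
move=> HS /set0Pn [x _].
have n_gt0 : (0 < n)%N := leq_ltn_trans (leq0n _) (ltn_ord (own x)).
have := cost_le_sum_Hval_setD HS; rewrite !sumrB sumr_const card_ord.
by rewrite mulrnBl potential_rec //; lra.
Qed.

End Mechanism.

Section Peeling.
Variables (R : realDomainType) (n : nat) (M : finType) (own : M -> 'I_n).

Lemma setD_part_proper (S : {set M}) (x : M) :
  x \in S -> S :\: part own (own x) \proper S.
Proof.
move=> xS; rewrite properEneq subsetDl andbT; apply/eqP => /setP/(_ x).
by rewrite !inE eqxx xS.
Qed.

Lemma nonpos_by_peeling (Fin : {set M} -> Prop) (d : {set M} -> R) :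
  (forall S i, Fin S -> Fin (S :\: part own i)) ->
  (forall S, Fin S -> S != set0 -> d S *+ n <= \sum_(i < n) d (S :\: part own i)) ->
  d set0 <= 0 -> forall S, Fin S -> d S <= 0.
Proof.
move=> Fin_peel d_peel d0 S.
elim: {S}_.+1 {-2}S (ltnSn #|S|) => // k IH S Sk FS.
have [->|S_neq0] := eqVneq S set0; first exact: d0.
have /set0Pn [x xS] := S_neq0.
have peel_proper i : S :\: part own i \proper S -> d (S :\: part own i) <= 0.
  move=> /proper_card lt_S; apply: IH (Fin_peel _ _ FS).
  by rewrite -ltnS (leq_trans _ Sk).
rewrite leNgt; apply/negP => dS_gt0.
have peel_le i : d (S :\: part own i) <= d S.
  have [->//|ne] := eqVneq (S :\: part own i) S.
  by rewrite (le_trans _ (ltW dS_gt0)) // peel_proper // properEneq ne subsetDl.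
have peel_lt : d (S :\: part own (own x)) < d S.
  by rewrite (le_lt_trans _ dS_gt0) // peel_proper // setD_part_proper.
have := d_peel S FS S_neq0; apply/negP; rewrite -ltNge.
have -> : d S *+ n = \sum_(i < n) d S by rewrite sumr_const card_ord.
rewrite [X in X < _](bigD1 (own x)) // [X in _ < X](bigD1 (own x)) //=.
by rewrite ltr_leD // ler_sum.
Qed.

End Peeling.

Unset Implicit Arguments.

Theorem theorem5p3 (R : realFieldType) (n : nat) (M : finType) (own : M -> 'I_n)
  (C : {set M} -> R) (H : {set M} -> option R)
  (HC0 : C set0 = 0)
  (HCnn : forall S : {set M}, 0 <= C S)
  (HCmono : forall S T : {set M}, S \subset T -> C S <= C T)
  (HH0 : H set0 = Some 0)
  (HHnn : forall (S : {set M}) h, H S = Some h -> 0 <= h)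
  (HHmono : forall S T : {set M}, S \subset T -> ext_le (H S) (H T))
  (D : profile R n M -> Prop)
  (HDvalid : forall v, D v -> valid_profile own v)
  (HDadd : forall v, valid_profile own v -> additive_profile own v -> D v)
  (alg : profile R n M -> {set M})
  (alg_minus : profile R n M -> 'I_n -> {set M})
  (Halg : forall v, D v -> is_opt own H v (fun _ => True) (alg v))
  (Halg_minus : forall v i, D v ->
     is_opt own H v (fun T => T :&: part own i = set0) (alg_minus v i))
  (Hcover : forall v, D v ->
     C (alg v) <= \sum_(i < n) vcg_payment own H v i (alg v) (alg_minus v i)) :
  forall S : {set M}, ext_le (Some (potential own C S)) (H S).
Proof.
pose d T := potential own C T - Hval H T.
have d_le0 : forall S, H S <> None -> d S <= 0.
  apply: (nonpos_by_peeling (own := own)).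
  - move=> S i; case HS: (H S) => [h|] // _.
    by have [-> _] := Hval_subset HHmono (subsetDl S (part own i)) HS.
  - move=> S; case HS: (H S) => [h|] // _ S_neq0; rewrite /d {1}/Hval HS /=.
    exact: (potential_gap_le_peeled HHnn HHmono HCmono HDadd Halg Halg_minus Hcover HC0).
  - by rewrite /d potential0 // /Hval HH0 subrr.
move=> S; case HS: (H S) => [h|] //=.
by have := d_le0 S; rewrite /d /Hval HS subr_le0; apply.
Qed.
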